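(* For every $\lambda\in\Omega=\{\lambda\in\mathbb D:\ 0\le\mathrm{Re}(\lambda)\le|\lambda|^2-\tfrac12\}$ there exist $a>1$ and $b>2^{-1/2}$ such that $R_{a,b}\subset(\lambda R_{a,b}-1)\cup(\lambda R_{a,b}+1)$.
   Context: $\mathbb D$ is the open unit disc. For $a,b>0$, $R_{a,b}\subset\mathbb C$ is the closed rectangle centered at $0$ with vertices $\pm a\pm ib$; $\lambda E+c=\{\lambda z+c:z\in E\}$. *)

From Stdlib Require Import Reals.
From Coquelicot Require Import Coquelicot.
Open Scope R_scope.

Definition rect (a b : R) (z : C) : Prop :=
  Rabs (Re z) <= a /\ Rabs (Im z) <= b.

Definition affine_image (lam c : C) (E : C -> Prop) (w : C) : Prop :=
  exists z : C, E z /\ w = Cplus (Cmult lam z) c.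

Definition Omega (lam : C) : Prop :=
  Cmod lam < 1 /\ 0 <= Re lam /\ Re lam <= (Cmod lam) ^ 2 - / 2.

(* Write lam = x + iy, n = |lam|^2 and take a = (2n - x)/n, b = |y|/n.  A point z
   of R_{a,b} lies in lam R_{a,b} + 1 iff (z - 1)/lam lies in R_{a,b}; clearing the
   denominator n, this holds whenever y Im(z conj(lam)) <= 0, i.e. z lies on a
   suitable side of the line through 0 and lam.  As R_{a,b} = -R_{a,b}, the points
   on the other side are handled by z |-> -z, which exchanges the translates by +1
   and -1.  The inequalities needed are those of Omega in the form y^2 >= 1/2 and
   y^2 <= n^2 + (n - x)^2. *)

From Stdlib Require Import Reals Lra Psatz.
From Coquelicot Require Import Coquelicot.
Open Scope R_scope.

Lemma Re_div (w l : C) : Re (w / l) = (Re w * Re l + Im w * Im l) / (Re l ^ 2 + Im l ^ 2).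
Proof. destruct w, l; unfold Cdiv, Cinv, Cmult; simpl; unfold Rdiv; ring. Qed.

Lemma Im_div (w l : C) : Im (w / l) = (Im w * Re l - Re w * Im l) / (Re l ^ 2 + Im l ^ 2).
Proof. destruct w, l; unfold Cdiv, Cinv, Cmult; simpl; unfold Rdiv; ring. Qed.

Lemma Rabs_div_le (s p n : R) : 0 < n -> Rabs s <= p -> Rabs (s / n) <= p / n.
Proof.
intros n_pos s_le.
rewrite Rabs_div, (Rabs_pos_eq n) by lra.
unfold Rdiv; apply Rmult_le_compat_r; [left; apply Rinv_0_lt_compat |]; lra.
Qed.

Lemma affine_image_of_preimage (lam c : C) (E : C -> Prop) (z : C) :
  lam <> 0%C -> E ((z - c) / lam)%C -> affine_image lam c E z.
Proof. intros lam_neq0 Ew; exists ((z - c) / lam)%C; split; [exact Ew | field; exact lam_neq0]. Qed.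

Lemma affine_image_opp (lam c : C) (E : C -> Prop) (z : C) :
  (forall w, E w -> E (- w)%C) ->
  affine_image lam c E (- z)%C -> affine_image lam (- c)%C E z.
Proof.
intros E_opp [w [Ew zw]]; exists (- w)%C; split; [now apply E_opp |].
replace z with (- - z)%C by ring; rewrite zw; ring.
Qed.

Lemma rect_opp (a b : R) (z : C) : rect a b z -> rect a b (- z)%C.
Proof. destruct z; unfold rect; simpl; now rewrite !Rabs_Ropp. Qed.

Definition cover_width (x y : R) : R := (2 * (x^2 + y^2) - x) / (x^2 + y^2).
Definition cover_height (x y : R) : R := Rabs y / (x^2 + y^2).

Section Covering.

Variables x y : R.
Hypothesis x_ge0 : 0 <= x.
Hypothesis norm_lt1 : x^2 + y^2 < 1.
Hypothesis omega_ineq : / 2 <= x^2 + y^2 - x.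

Lemma y_sq_ge_half : / 2 <= y^2.
Proof. nra. Qed.

Lemma norm_pos : 0 < x^2 + y^2.
Proof. pose proof y_sq_ge_half; nra. Qed.

Lemma cover_width_gt1 : 1 < cover_width x y.
Proof. pose proof norm_pos. apply Rlt_div_r; lra. Qed.

Lemma cover_height_gt : / sqrt 2 < cover_height x y.
Proof.
pose proof norm_pos as n_pos.
assert (y_abs : / sqrt 2 <= Rabs y).
{ rewrite <- sqrt_inv, <- sqrt_Rsqr_abs. apply sqrt_le_1_alt. pose proof y_sq_ge_half. unfold Rsqr. nra. }
assert (0 < / sqrt 2) by (apply Rinv_0_lt_compat, sqrt_lt_R0; lra).
apply Rlt_div_r; [lra|]. nra.
Qed.

Section ShiftBounds.

Variables u v : R.
Hypothesis u_bound : Rabs u * (x^2 + y^2) <= 2 * (x^2 + y^2) - x.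
Hypothesis v_bound : Rabs v * (x^2 + y^2) <= Rabs y.
Hypothesis side : y * (v * x - u * y) <= 0.

Lemma vy_bound : Rabs (v * y) * (x^2 + y^2) <= y^2.
Proof.
assert (h : Rabs y * (Rabs v * (x^2 + y^2)) <= Rabs y * Rabs y)
  by (apply Rmult_le_compat_l; [apply Rabs_pos | exact v_bound]).
rewrite <- Rabs_mult, (Rabs_pos_eq (y * y)) in h by nra.
rewrite Rabs_mult. nra.
Qed.

Lemma re_shift_bound : Rabs ((u - 1) * x + v * y) <= 2 * (x^2 + y^2) - x.
Proof.
pose proof y_sq_ge_half as y_sq. pose proof norm_pos as n_pos. pose proof vy_bound as vy.
apply Rabs_le; split.
- (* [side] times x gives y^2 (-ux - vy) <= -vy n <= y^2. *)
  assert (re_ge : - (u * x) - v * y <= 1).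
  { apply (Rmult_le_reg_l (y^2)); [lra|].
    pose proof (Rle_abs (- (v * y))) as h; rewrite Rabs_Ropp in h. nra. }
  lra.
- assert (u_le : u * (x^2 + y^2) <= 2 * (x^2 + y^2) - x).
  { pose proof (Rle_abs u). nra. }
  assert (ux : u * x * (x^2 + y^2) <= (2 * (x^2 + y^2) - x) * x) by nra.
  (* y^2 <= n <= n^2 + 1/4 <= n^2 + (n - x)^2 *)
  assert (key : y^2 <= (x^2 + y^2)^2 + (x^2 + y^2 - x)^2) by nra.
  assert (vy' : v * y * (x^2 + y^2) <= y^2).
  { pose proof (Rle_abs (v * y)). nra. }
  apply (Rmult_le_reg_r (x^2 + y^2)); [lra|].
  nra.
Qed.

Lemma im_shift_bound : Rabs (v * x - (u - 1) * y) <= Rabs y.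
Proof.
pose proof y_sq_ge_half as y_sq. pose proof norm_pos as n_pos.
assert (rot : Rabs (v * x - u * y) <= 2 * Rabs y).
{ apply (Rmult_le_reg_r (x^2 + y^2)); [lra|].
  pose proof (Rabs_triang (v * x) (- (u * y))) as t.
  rewrite !Rabs_mult, Rabs_Ropp, Rabs_mult, (Rabs_pos_eq x) in t by lra.
  assert (0 <= Rabs y) by apply Rabs_pos.
  unfold Rminus. nra. }
apply Rabs_le_between in rot.
destruct (Rle_or_lt 0 y) as [y_ge0 | y_lt0].
- rewrite (Rabs_pos_eq y) in rot |- * by lra.
  assert (v * x - u * y <= 0) by nra.
  apply Rabs_le; lra.
- rewrite (Rabs_left y) in rot |- * by lra.
  assert (0 <= v * x - u * y) by nra.
  apply Rabs_le; lra.
Qed.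

End ShiftBounds.

Lemma rect_shift (z : C) :
  rect (cover_width x y) (cover_height x y) z -> y * (Im z * x - Re z * y) <= 0 ->
  rect (cover_width x y) (cover_height x y) ((z - 1) / (x, y))%C.
Proof.
pose proof norm_pos as n_pos.
destruct z as [u v]; unfold rect, cover_width, cover_height.
rewrite Re_div, Im_div; cbn [Re Im fst snd Cminus Cplus Copp RtoC].
intros [u_le v_le] side_uv.
apply Rle_div_r in u_le, v_le; try lra.
replace (u + - (1)) with (u - 1) by ring. rewrite Ropp_0, Rplus_0_r.
split; apply Rabs_div_le; try exact n_pos.
- exact (re_shift_bound u v u_le v_le side_uv).
- exact (im_shift_bound u v u_le v_le side_uv).
Qed.

Lemma rect_cover (z : C) :
  rect (cover_width x y) (cover_height x y) z ->
  affine_image (x, y) (RtoC (-1)) (rect (cover_width x y) (cover_height x y)) z \/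
  affine_image (x, y) (RtoC 1) (rect (cover_width x y) (cover_height x y)) z.
Proof.
intros z_in.
assert (lam_neq0 : ((x, y) : C) <> 0%C).
{ pose proof norm_pos. intros lam0; injection lam0 as -> ->. nra. }
destruct (Rle_or_lt (y * (Im z * x - Re z * y)) 0) as [side_z | side_z].
- right. apply affine_image_of_preimage; [exact lam_neq0 |]. now apply rect_shift.
- left. replace (RtoC (-1)) with (- RtoC 1)%C by (unfold RtoC, Copp; simpl; f_equal; ring).
  apply affine_image_opp; [apply rect_opp |].
  apply affine_image_of_preimage; [exact lam_neq0 |].
  apply rect_shift; [now apply rect_opp |]. destruct z; simpl in *. lra.
Qed.

End Covering.

Lemma Omega_coords (x y : R) :
  Omega (x, y) -> 0 <= x /\ x^2 + y^2 < 1 /\ / 2 <= x^2 + y^2 - x.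
Proof.
unfold Omega; rewrite Cmod2_alt; cbn [Re Im fst snd].
intros [mod_lt1 [x_ge0 omega_ineq]].
assert (x^2 + y^2 < 1).
{ replace (x^2 + y^2) with (Cmod (x, y) ^ 2) by apply Cmod2_alt.
  pose proof (Cmod_ge_0 (x, y)). nra. }
repeat split; lra.
Qed.

Theorem mainTheorem12 :
  forall lam : C, Omega lam ->
  exists a b : R, 1 < a /\ / sqrt 2 < b /\
    (forall z : C, rect a b z ->
       affine_image lam (RtoC (-1)) (rect a b) z \/
       affine_image lam (RtoC 1) (rect a b) z).
Proof.
intros [x y] omega_lam.
destruct (Omega_coords x y omega_lam) as [x_ge0 [norm_lt1 omega_ineq]].
exists (cover_width x y), (cover_height x y).
split; [| split].
- now apply cover_width_gt1.
- now apply cover_height_gt.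
- now apply rect_cover.
Qed.
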